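(* Let $u>1$ be an integer, let $r=u+1$, and let $s\ge 2u+2$ be an integer. Let $x$ be a non-negative integer whose $r$-canonical representation is $[x]^r=\binom{n}{r}+\binom{m}{r-1}+\binom{2u-1}{r-2}$. Then for every integer $y$ with $\binom{n}{r}+\binom{m}{r-1}\le y\le x$, $$k_s(k_r\le y)=\binom{n}{s}+\binom{m}{s-1}.$$
   Context: All graphs are finite simple graphs. For a graph $g$ and an integer $r>1$, $k_r(g)$ denotes the number of subgraphs of $g$ isomorphic to the complete graph $K_r$. For $r<s$ and a non-negative integer $x$, $k_s(k_r\le x)$ denotes the maximum of $k_s(g)$ over all graphs $g$ with $k_r(g)\le x$. The $r$-canonical representation $[x]^r$ of a non-negative integer $x$ is obtained greedily: choose $a_r$ as large as possible with $\binom{a_r}{r}\le x$, then $a_{r-1}$ as large as possible with $\binom{a_{r-1}}{r-1}\le x-\binom{a_r}{r}$, and so on, until $x=\binom{a_r}{r}+\binom{a_{r-1}}{r-1}+\dots+\binom{a_{r-j}}{r-j}$; one has $a_r>a_{r-1}>\dots>a_{r-j}$. A binomial coefficient whose top entry is less than its bottom entry is taken to be $0$. *)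

From mathcomp Require Import all_boot.
Set Implicit Arguments. Unset Strict Implicit. Unset Printing Implicit Defensive.

Definition simple_graph (T : finType) (e : rel T) : Prop :=
  symmetric e /\ irreflexive e.

Definition clique (T : finType) (e : rel T) (A : {set T}) : bool :=
  [forall x in A, forall y in A, (x != y) ==> e x y].

(* k_r(g): number of subgraphs isomorphic to K_r, i.e. number of r-cliques. *)
Definition kcount (T : finType) (e : rel T) (r : nat) : nat :=
  #|[set A : {set T} | (#|A| == r) && clique e A]|.

(* "k_s(k_r <= x) = N": N is the maximum of k_s(g) over all finite simple
   graphs g with k_r(g) <= x (attained, and an upper bound). *)
Definition max_ks_kr_le (s r x N : nat) : Prop :=
  (exists (T : finType) (e : rel T),
      simple_graph e /\ kcount e r <= x /\ kcount e s = N) /\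
  (forall (T : finType) (e : rel T),
      simple_graph e -> kcount e r <= x -> kcount e s <= N).

(* greedy step: largest a with 'C(a, k) <= x (for x >= 1, k >= 1 such a
   exists and satisfies a <= x + k - 1, so searching a < x + k + 1 suffices). *)
Definition greedy_top (k x : nat) : nat :=
  last 0 [seq a <- iota 0 (x + k + 1) | 'C(a, k) <= x].

(* k-canonical representation of x: the list [a_k; a_(k-1); ...; a_(k-j)]
   of top entries, obtained greedily, stopping once the remainder is 0. *)
Fixpoint canon (k x : nat) : seq nat :=
  match k with
  | 0 => [::]
  | k'.+1 =>
      if x == 0 then [::]
      else let a := greedy_top k x in a :: canon k' (x - 'C(a, k))
  end.

From mathcomp Require Import all_boot zify.
Set Implicit Arguments. Unset Strict Implicit. Unset Printing Implicit Defensive.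

(* The bound is attained by K_n together with a vertex joined to m of its
   vertices.  Conversely, the r-cliques of a graph contain the iterated shadow
   of its s-cliques, so the Kruskal-Katona theorem in cascade form transfers
   lower bounds from k_s to k_r.  If k_s > C(n,s) + C(m,s-1), then k_s is at
   least the next cascade value, typically that of [n; m; s-2], which forces
   k_r >= C(n,r) + C(m,r-1) + C(s-2,r-2) > x since s-2 >= 2u.  Kruskal-Katona
   itself follows from Frankl's argument: shift the family towards a point e,
   split it into the sets avoiding e and the link of e, and induct on the
   ground set. *)

(* [cascade_sum k [:: a_k; a_(k-1); ...]] is C(a_k, k) + C(a_(k-1), k-1) + ...;
   in a [cascade] the entries decrease strictly and a_i >= i for i >= 1. *)
Fixpoint cascade_sum (k : nat) (A : seq nat) {struct A} : nat :=
  if A is a :: A' then 'C(a, k) + (if k is k'.+1 then cascade_sum k' A' else 0)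
  else 0.

Fixpoint cascade (k : nat) (A : seq nat) {struct A} : bool :=
  if A is a :: A' then
    if k is k'.+1 then [&& k <= a, head 0 A' < a & cascade k' A'] else true
  else true.

Lemma cascade_sum0 A : cascade_sum 0 A = (0 < size A).
Proof. by case: A => //= a A; rewrite bin0. Qed.

Lemma cascade_sumS k a A : cascade_sum k.+1 (a :: A) = 'C(a, k.+1) + cascade_sum k A.
Proof. by []. Qed.

Lemma cascade_sum1 k a : cascade_sum k [:: a] = 'C(a, k).
Proof. by case: k => [|k] /=; rewrite addn0. Qed.

Lemma cascadeS k a A : cascade k.+1 (a :: A) = [&& k < a, head 0 A < a & cascade k A].
Proof. by []. Qed.

Lemma cascade1 k a : k <= a -> cascade k [:: a].
Proof. by case: k => //= k ka; rewrite ka (leq_ltn_trans _ ka). Qed.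

Lemma cascade_sum_eq0 k A : cascade k.+1 A -> cascade_sum k.+1 A = 0 -> A = [::].
Proof. by case: A => //= a A /and3P [ka _ _]; have := bin_gt0 a k.+1; rewrite ka; lia. Qed.

Lemma cascadeW k A : cascade k.+1 A -> cascade k A.
Proof.
elim: A k => [|a A IH] [|k] //= /and3P [ka hd hA].
by rewrite ltnW // hd IH.
Qed.

Lemma cascade_predn k A : cascade k.+1 A -> cascade k (map predn A).
Proof.
elim: A k => [|a A IH] [|k] //= /and3P [ka hd hA].
rewrite IH // andbT; case: A {IH} hd hA => /= [|b A] hd; first lia.
by case/andP; lia.
Qed.

Lemma cascade_sum_pascal k A : cascade k.+1 A ->
  cascade_sum k.+1 A = cascade_sum k.+1 (map predn A) + cascade_sum k (map predn A).
Proof.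
elim: A k => [|a A IH] k //= /and3P [ka _ hA].
case: a ka => // a _; case: k hA => [|k] hA /=.
  by rewrite !bin1 bin0 !cascade_sum0 size_map; lia.
by rewrite binS (IH k hA); lia.
Qed.

(* An entry equal to its level forces every later entry to equal its level. *)
Lemma cascade_sum_tight k A : cascade k.+1 A -> head 0 A <= k.+1 ->
  cascade_sum k (map predn A) <= k.+1.
Proof.
elim: A k => [|a A IH] k //= /and3P [ka hd hA] ak.
have {ka ak} ea : a = k.+1 by lia.
subst a.
case: k hd hA => [|k] hd hA /=; first by rewrite bin0.
by rewrite binn; have := IH k hA hd; lia.
Qed.

(* [map predn A] fails to be a cascade at the first entry equal to its level;
   [cascade_pred] keeps that entry, drops the rest and decrements the others. *)
Fixpoint cascade_pred (k : nat) (A : seq nat) : seq nat :=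
  if A is a :: A' then (if a <= k then [:: a] else a.-1 :: cascade_pred k.-1 A')
  else [::].

Lemma cascade_cascade_pred k A : cascade k A -> cascade k (cascade_pred k A).
Proof.
elim: A k => [|a A IH] [|k] //=; first by case: ifP.
case/and3P=> ka hd hA.
case: ifP => /= ak; first by rewrite ka; lia.
rewrite IH // andbT; apply/andP; split; first lia.
case: A {IH} hd hA => /= [|b A] hd _; first lia.
by case: ifP => bk /=; lia.
Qed.

Lemma cascade_sum_cascade_pred k A : cascade k A ->
  cascade_sum k (cascade_pred k A) <= (cascade_sum k (map predn A)).+1.
Proof.
elim: A k => [|a A IH] [|k] //=; first by case: ifP; rewrite /= !bin0.
case/and3P=> ka hd hA.
case: ifP => /= ak; first by rewrite (_ : a = k.+1) ?binn; lia.
by have := IH k hA; lia.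
Qed.

Lemma cascade_sum_predn_le k A : cascade k.+1 A ->
  cascade_sum k (map predn A) <= cascade_sum k (cascade_pred k.+1 A).
Proof.
elim: A k => [|a A IH] k //= /and3P [ka hd hA].
case: ifP => ak.
  have tight := @cascade_sum_tight k (a :: A); rewrite /= ka hd hA in tight.
  apply: leq_trans (tight isT ak) _.
  by rewrite /= (_ : a = k.+1) ?binSn ?leq_addr //; lia.
case: k {ka hd ak} hA => //= k hA.
by rewrite leq_add2l IH.
Qed.

(* The Kruskal-Katona conclusion for a (k+1)-uniform family of [f] sets whose
   shadow has [s] sets. *)
Definition kk_bound k f s := forall L, cascade k.+1 L ->
  cascade_sum k.+1 L <= f -> cascade_sum k L <= s.

Lemma kk_boundW k f s s' : kk_bound k f s -> s <= s' -> kk_bound k f s'.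
Proof. by move=> kk ss' L hL /(kk L hL) /leq_trans; apply. Qed.

Lemma kk_bound0 k s : kk_bound k 0 s.
Proof. by move=> L hL; rewrite leqn0 => /eqP /(cascade_sum_eq0 hL) ->. Qed.

Lemma kk_bound_base f s : 0 < s -> kk_bound 0 f s.
Proof. by move=> s0 L _ _; rewrite cascade_sum0; case: (0 < size L). Qed.

Lemma kk_bound_add k f0 s0 f1 s1 : kk_bound k.+1 f0 s0 -> kk_bound k f1 s1 ->
  s0 <= f1 -> kk_bound k.+1 (f0 + f1) (f1 + s1).
Proof.
move=> kk0 kk1 s0f1 L hL.
rewrite (cascade_sum_pascal hL) (cascade_sum_pascal (cascadeW hL)) => hsum.
have [small | big] := leqP (cascade_sum k.+1 (map predn L)) f1.
  by have := kk1 _ (cascade_predn hL) small; lia.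
(* Otherwise [cascade_pred L] stays below [f0], but its shadow exceeds [f1 >= s0]. *)
have := kk0 _ (cascade_cascade_pred hL).
have := cascade_sum_cascade_pred hL; have := cascade_sum_predn_le hL.
lia.
Qed.

Section Shadow.
Variable T : finType.
Implicit Types (A B C D : {set T}) (F G : {set {set T}}) (e x y : T).

Lemma setU1D1K e x A : e \notin A -> (e |: (A :\ x)) :\ e = A :\ x.
Proof. by move=> eA; rewrite setU1K // !inE negb_and eA orbT. Qed.

Lemma setD1U1D1 e x y A : y != e -> (e |: (A :\ x)) :\ y = e |: (A :\ y :\ x).
Proof.
move=> ye; apply/setP => z; rewrite !inE.
by case: (eqVneq z e) => [->|_] /=; [rewrite eq_sym ye | rewrite andbCA].
Qed.

Lemma setU1D1D1 e y A : e \in A -> e != y -> e |: (A :\ e :\ y) = A :\ y.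
Proof.
move=> eA ey; apply/setP => z; rewrite !inE.
by case: (eqVneq z e) => [->|] //=; rewrite eA ey.
Qed.

Definition shadow F : {set {set T}} := [set A :\ x | A in F, x in A].

Lemma mem_shadow F A x : A \in F -> x \in A -> A :\ x \in shadow F.
Proof. by move=> AF xA; apply/imset2P; exists A x. Qed.

Definition uniform k F := {in F, forall A, #|A| = k}.

Definition shift1 e x F A :=
  if [&& x \in A, e \notin A & e |: (A :\ x) \notin F] then e |: (A :\ x) else A.

Definition shift e x F := [set shift1 e x F A | A in F].

Lemma shift1_id e x F A : (x \notin A) || (e \in A) -> shift1 e x F A = A.
Proof. by rewrite /shift1; case: (x \in A) (e \in A) => [] []. Qed.

Lemma mem_shift_id e x F A : A \in F -> (x \notin A) || (e \in A) -> A \in shift e x F.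
Proof. by move=> AF /(shift1_id F) <-; apply: imset_f. Qed.

Lemma shift1_inj e x F : {in F &, injective (shift1 e x F)}.
Proof.
move=> A1 A2 A1F A2F; rewrite /shift1.
case: and3P => [[x1 e1 n1]|_]; case: and3P => [[x2 e2 n2]|_] E.
- by rewrite -(setD1K x1) -(setD1K x2) -(setU1D1K x e1) -(setU1D1K x e2) E.
- by rewrite E A2F in n1.
- by rewrite -E A1F in n2.
- by [].
Qed.

Lemma card_shift e x F : #|shift e x F| = #|F|.
Proof. exact/card_in_imset/shift1_inj. Qed.

Lemma shift_uniform k e x F : uniform k F -> uniform k (shift e x F).
Proof.
move=> uF _ /imsetP [A AF ->]; rewrite /shift1.
case: and3P => [[xA eA _]|_]; last exact: uF.
by rewrite cardsU1 inE negb_and eA orbT -(uF A AF) (cardsD1 x A) xA.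
Qed.

Lemma shift_powerset D e x F :
  e \in D -> F \subset powerset D -> shift e x F \subset powerset D.
Proof.
move=> eD /subsetP DF; apply/subsetP => _ /imsetP [A AF ->].
move: (DF A AF); rewrite !powersetE /shift1 => AD.
case: and3P => // _; rewrite subUset sub1set eD.
exact: subset_trans (subD1set A x) AD.
Qed.

Lemma shadow_shift e x F : shadow (shift e x F) \subset shift e x (shadow F).
Proof.
apply/subsetP => _ /imset2P [_ y /imsetP [A AF ->] yA ->].
rewrite /shift1 in yA *; case: and3P yA => [[xA eA nF] yS | cond yA].
  have [-> | ye] := eqVneq y e.
    by rewrite setU1D1K //; apply: mem_shift_id (mem_shadow AF xA) _; rewrite setD11.
  move: yS; rewrite !inE (negbTE ye) /= => /andP [yx {}yA].
  rewrite setD1U1D1 //.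
  have [CF | nC] := boolP (e |: (A :\ y :\ x) \in shadow F).
    by apply: mem_shift_id CF _; rewrite setU11 orbT.
  apply/imsetP; exists (A :\ y); first exact: mem_shadow.
  by rewrite /shift1 nC !inE (negbTE eA) xA eq_sym yx andbF.
(* [A] was not moved, and [A :\ y] is not moved either: its image is in the shadow. *)
apply/imsetP; exists (A :\ y); first exact: mem_shadow.
rewrite /shift1; case: and3P => // [[xAy eAy]].
move=> /negP []; move: xAy; rewrite !inE => /andP [xy xA].
have [eA | eA] := boolP (e \in A).
  have ye : y = e by apply/eqP; move: eAy; rewrite !inE eA andbT negbK eq_sym.
  by subst y; rewrite setU1D1D1 ?mem_shadow // eq_sym.
have SF : e |: (A :\ x) \in F by apply/negPn/negP => nF; apply: cond.
have ye : y != e by apply: contraNneq eA => <-.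
rewrite -setD1U1D1 //; apply: mem_shadow SF _.
by rewrite !inE (negbTE ye) eq_sym xy.
Qed.

Lemma card_shadow_shift e x F : #|shadow (shift e x F)| <= #|shadow F|.
Proof. by rewrite -(card_shift e x (shadow F)); apply/subset_leq_card/shadow_shift. Qed.

Definition star e F := [set A in F | e \in A].
Definition del e F := [set A in F | e \notin A].
Definition link e F := [set A :\ e | A in star e F].

Lemma card_star e F : #|star e F| <= #|F|.
Proof. by apply/subset_leq_card/subsetP => A; rewrite inE => /andP []. Qed.

Lemma card_star_shift e x F A : A \in F -> x \in A -> e \notin A ->
  e |: (A :\ x) \notin F -> #|star e F| < #|star e (shift e x F)|.
Proof.
move=> AF xA eA nF; apply/proper_card/properP; split.
  apply/subsetP => B; rewrite !inE => /andP [BF eB]; rewrite eB andbT.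
  by apply: mem_shift_id; rewrite ?eB ?orbT.
exists (e |: (A :\ x)); last by rewrite inE (negbTE nF).
by rewrite inE setU11 andbT; apply/imsetP; exists A; rewrite // /shift1 xA eA nF.
Qed.

Definition shifted e F :=
  [forall A in F, forall x in A, (e \notin A) ==> (e |: (A :\ x) \in F)].

Lemma shifted_exists D k e F : e \in D -> F \subset powerset D -> uniform k F ->
  exists G, [/\ G \subset powerset D, uniform k G, #|G| = #|F|,
                #|shadow G| <= #|shadow F| & shifted e G].
Proof.
move=> eD; have [N] := ubnP (#|F| - #|star e F|).
elim: N F => // N IH F ltF DF uF.
have [shF | /forallPn [A]] := boolP (shifted e F); first by exists F.
rewrite negb_imply => /andP [AF /forallPn [x]].
rewrite negb_imply => /andP [xA]; rewrite negb_imply => /andP [eA nF].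
have ltS := card_star_shift AF xA eA nF.
have [|||G [DG uG cardG shG shiftedG]] := IH (shift e x F).
- by have := card_star e (shift e x F); rewrite card_shift in ltS *; lia.
- exact: shift_powerset.
- exact: shift_uniform.
exists G; split => //; first by rewrite cardG card_shift.
exact: leq_trans shG (card_shadow_shift e x F).
Qed.

Lemma card_del_link e F : #|F| = #|del e F| + #|link e F|.
Proof.
rewrite card_in_imset; last first.
  move=> A B; rewrite !inE => /andP [_ eA] /andP [_ eB] E.
  by rewrite -(setD1K eA) -(setD1K eB) E.
rewrite -(cardsID [set A : {set T} | e \in A] F) addnC.
by congr (_ + _); apply: eq_card => A; rewrite !inE andbC.
Qed.

Lemma del_powerset D e F : F \subset powerset D -> del e F \subset powerset (D :\ e).
Proof.
move=> /subsetP DF; apply/subsetP => A; rewrite inE => /andP [/DF].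
rewrite !powersetE => AD eA; apply/subsetP => z zA.
by rewrite !inE (subsetP AD z zA) andbT; apply: contraNneq eA => <-.
Qed.

Lemma link_powerset D e F : F \subset powerset D -> link e F \subset powerset (D :\ e).
Proof.
move=> /subsetP DF; apply/subsetP => _ /imsetP [A + ->].
by rewrite inE powersetE => /andP [/DF]; rewrite powersetE => AD _; apply: setSD.
Qed.

Lemma del_uniform k e F : uniform k F -> uniform k (del e F).
Proof. by move=> uF A; rewrite inE => /andP [/uF]. Qed.

Lemma link_uniform k e F : uniform k.+1 F -> uniform k (link e F).
Proof.
move=> uF _ /imsetP [A + ->]; rewrite inE => /andP [AF eA].
by move: (uF A AF); rewrite (cardsD1 e A) eA => -[].
Qed.

Lemma shadow_del e G : shifted e G -> shadow (del e G) \subset link e G.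
Proof.
move=> /forallP shG; apply/subsetP => _ /imset2P [A x + xA ->].
rewrite inE => /andP [AG eA].
have SG : e |: (A :\ x) \in G.
  by move: (shG A); rewrite AG => /forallP /(_ x); rewrite xA eA.
by apply/imsetP; exists (e |: (A :\ x)); rewrite ?setU1D1K // inE SG setU11.
Qed.

(* The link and the sets [e |: C], [C] in its shadow, are disjoint parts of the shadow. *)
Lemma card_link_shadow e G : #|link e G| + #|shadow (link e G)| <= #|shadow G|.
Proof.
set L := link e G.
have eL : {in L, forall B, e \notin B} by move=> _ /imsetP [A _ ->]; rewrite setD11.
have eSL : {in shadow L, forall C, e \notin C}.
  by move=> _ /imset2P [B y /eL eB _ ->]; rewrite inE negb_and eB orbT.
have -> : #|shadow L| = #|[set e |: C | C in shadow L]|.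
  apply/esym/card_in_imset => C1 C2 /eSL e1 /eSL e2 E.
  by rewrite -(setU1K e1) -(setU1K e2) E.
rewrite -cardsUI (_ : _ :&: _ = set0) ?cards0 ?addn0.
  apply/subset_leq_card/subsetP => B /setUP [].
    by move=> /imsetP [A + ->]; rewrite inE => /andP [AG eA]; apply: mem_shadow.
  move=> /imsetP [_ /imset2P [_ y /imsetP [A + ->] + ->] ->].
  rewrite !inE => /andP [AG eA] /andP [ye yA].
  by rewrite setU1D1D1 ?mem_shadow // eq_sym.
apply/setP => B; rewrite !inE; apply/negP => /andP [/eL eB /imsetP [C _ EB]].
by rewrite EB setU11 in eB.
Qed.

Lemma kruskal_katona_in D k F :
  F \subset powerset D -> uniform k.+1 F -> kk_bound k #|F| #|shadow F|.
Proof.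
have [N] := ubnP #|D|; elim: N D k F => // N IH D k F ltD DF uF.
have [-> | [A0 A0F]] := set_0Vmem F; first by rewrite cards0; apply: kk_bound0.
have [e eA0] : exists e, e \in A0 by apply/card_gt0P; rewrite uF.
have eD : e \in D by move: (subsetP DF A0 A0F); rewrite powersetE => /subsetP; apply.
case: k uF => [|k] uF.
  apply: kk_bound_base; rewrite card_gt0.
  by apply/set0Pn; exists (A0 :\ e); apply: mem_shadow.
have [G [DG uG <- shG shiftedG]] := shifted_exists eD DF uF.
apply: (kk_boundW _ shG); apply: (kk_boundW _ (card_link_shadow e G)).
have ltDe : #|D :\ e| < N by move: ltD; rewrite (cardsD1 e D) eD.
rewrite (card_del_link e G); apply: kk_bound_add.
- exact: IH _ _ _ ltDe (del_powerset e DG) (del_uniform uG).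
- exact: IH _ _ _ ltDe (link_powerset e DG) (link_uniform uG).
- exact/subset_leq_card/shadow_del.
Qed.

Theorem kruskal_katona k F : uniform k.+1 F -> kk_bound k #|F| #|shadow F|.
Proof. by apply: (@kruskal_katona_in setT); rewrite powersetT subsetT. Qed.

End Shadow.

Section Cliques.
Variables (T : finType) (e : rel T).
Implicit Types A B : {set T}.

Definition cliques k := [set A : {set T} | (#|A| == k) && clique e A].

Lemma kcountE k : kcount e k = #|cliques k|.
Proof. by []. Qed.

Lemma cliqueS A B : B \subset A -> clique e A -> clique e B.
Proof.
move=> /subsetP BA /forall_inP clA; apply/forall_inP => x xB.
by apply/forall_inP => y yB; move/forall_inP: (clA x (BA x xB)); apply; apply: BA.
Qed.

Lemma cliques_uniform k : uniform k (cliques k).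
Proof. by move=> A; rewrite inE => /andP [/eqP]. Qed.

Lemma shadow_cliques k : shadow (cliques k.+1) \subset cliques k.
Proof.
apply/subsetP => _ /imset2P [A x + xA ->]; rewrite !inE => /andP [/eqP cA clA].
by rewrite (cliqueS (subD1set A x) clA) andbT -eqSS -cA (cardsD1 x A) xA.
Qed.

Lemma kcount_cascade r s L : r <= s -> cascade s L ->
  cascade_sum s L <= kcount e s -> cascade_sum r L <= kcount e r.
Proof.
elim: s => [|s IH] rs hL hsum; first by move: rs; rewrite leqn0 => /eqP ->.
have [-> // | lt_rs] := eqVneq r s.+1.
apply: IH (cascadeW hL) _; first by rewrite -ltnS ltn_neqAle lt_rs.
rewrite kcountE; apply: leq_trans (subset_leq_card (shadow_cliques s)).
exact: (kruskal_katona (@cliques_uniform s.+1) hL hsum).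
Qed.

Lemma kcount_lower_bound n m k l : m < n -> k <= l ->
  'C(n, l.+2) + 'C(m, l.+1) < kcount e l.+2 ->
  'C(n, k.+2) + 'C(m, k.+1) + 'C(l, k) <= kcount e k.+2.
Proof.
move=> mn kl hlt; have kl2 : k.+2 <= l.+2 by [].
(* Use the cascade of C(n, l+2) + C(m, l+1) + 1, which depends on the vanishing terms. *)
have [nl | ln] := ltnP n l.+2.
  rewrite (bin_small nl) (@bin_small m) in hlt; last lia.
  have := kcount_cascade kl2 (cascade1 (leqnn _)); rewrite !cascade_sum1 binn.
  have := @leq_bin2l n l.+1 k.+2; have := @leq_bin2l m l k.+1.
  rewrite !binS; lia.
have [ml | lm] := ltnP m l.+1.
  rewrite (bin_small ml) in hlt.
  have hL : cascade l.+2 [:: n; l.+1] by rewrite /= ln leqnn.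
  have := kcount_cascade kl2 hL; rewrite /= binn.
  have := @leq_bin2l m l k.+1; rewrite binS; lia.
have hL : cascade l.+2 [:: n; m; l] by rewrite !cascadeS cascade1 //= ln mn lm.
have := kcount_cascade kl2 hL; rewrite !cascade_sumS !cascade_sum1 binn; lia.
Qed.

End Cliques.

Lemma card_ord_lt N k : k <= N -> #|[set i : 'I_N | i < k]| = k.
Proof.
move=> kN; have -> : [set i : 'I_N | i < k] = [set widen_ord kN j | j : 'I_k].
  apply/setP => i; rewrite !inE; apply/idP/imsetP => [ik | [j _ ->]]; last by rewrite /=.
  by exists (Ordinal ik) => //; apply: val_inj.
by rewrite card_imset ?card_ord // => i j /(congr1 val) /= /val_inj.
Qed.

Section CliquePlusVertex.
Variables n m : nat.
Hypothesis mn : m <= n.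

Definition clique_plus_vertex : rel 'I_n.+1 :=
  fun i j => (i != j) && [|| (i < n) && (j < n), i < m | j < m].

Let hub : 'I_n.+1 := ord_max.
Let nbhd := [set i : 'I_n.+1 | i < m].
Implicit Types A B : {set 'I_n.+1}.

Lemma clique_plus_vertex_simple : simple_graph clique_plus_vertex.
Proof.
split=> [i j | i]; last by rewrite /clique_plus_vertex eqxx.
by rewrite /clique_plus_vertex eq_sym (andbC (i < n)) (orbC (i < m)).
Qed.

Lemma ltn_hub (i : 'I_n.+1) : (i < n) = (i != hub).
Proof. by rewrite ltn_neqAle -ltnS ltn_ord andbT. Qed.

Lemma hub_notin_nbhd : hub \notin nbhd.
Proof. by rewrite inE -leqNgt. Qed.

Lemma clique_avoid_hub A : hub \notin A -> clique clique_plus_vertex A.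
Proof.
move=> hA; apply/forall_inP => i iA; apply/forall_inP => j jA; apply/implyP => ij.
have ih : i != hub by apply: contraNneq hA => <-.
have jh : j != hub by apply: contraNneq hA => <-.
by rewrite /clique_plus_vertex ij !ltn_hub ih jh.
Qed.

Lemma clique_hub_nbhd B : B \subset nbhd -> clique clique_plus_vertex (hub |: B).
Proof.
move=> /subsetP Bnb; apply/forall_inP => i; rewrite !inE => iB.
apply/forall_inP => j; rewrite !inE => jB; apply/implyP => ij.
rewrite /clique_plus_vertex ij /=.
have [/Bnb | iB'] := boolP (i \in B); first by rewrite inE => ->; rewrite orbT.
have ih : i = hub by move: iB; rewrite (negbTE iB') orbF => /eqP.
by move: jB; rewrite -ih eq_sym (negbTE ij) => /Bnb; rewrite inE => ->; rewrite !orbT.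
Qed.

Lemma clique_hub A : clique clique_plus_vertex A -> hub \in A -> A :\ hub \subset nbhd.
Proof.
move=> /forall_inP clA hA; apply/subsetP => j; rewrite !inE => /andP [jh jA].
move/forall_inP: (clA hub hA) => /(_ j jA); rewrite eq_sym jh /clique_plus_vertex /=.
by rewrite ltnn (ltnNge n m) mn => /andP [].
Qed.

Lemma del_hub_cliques k :
  del hub (cliques clique_plus_vertex k) =
  [set A : {set 'I_n.+1} | A \subset [set~ hub] & #|A| == k].
Proof.
apply/setP => A; rewrite !inE subsetC sub1set inE andbC.
by case: (boolP (hub \in A)) => //= hA; rewrite clique_avoid_hub ?andbT.
Qed.

Lemma link_hub_cliques k :
  link hub (cliques clique_plus_vertex k.+1) =
  [set B : {set 'I_n.+1} | B \subset nbhd & #|B| == k].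
Proof.
apply/setP => B; rewrite inE; apply/imsetP/andP => [[A] | [Bnb cB]].
  rewrite !inE => /andP [/andP [cA clA] hA] ->; split; first exact: clique_hub.
  by move: cA; rewrite (cardsD1 hub A) hA.
have hB : hub \notin B by apply: contra hub_notin_nbhd => /(subsetP Bnb).
exists (hub |: B); last by rewrite setU1K.
by rewrite !inE eqxx cardsU1 hB (eqP cB) add1n eqxx clique_hub_nbhd.
Qed.

Lemma kcount_clique_plus_vertex k :
  kcount clique_plus_vertex k.+1 = 'C(n, k.+1) + 'C(m, k).
Proof.
rewrite kcountE (card_del_link hub) del_hub_cliques link_hub_cliques !cards_draws.
by rewrite cardsC1 card_ord /nbhd card_ord_lt // leqW.
Qed.

End CliquePlusVertex.

Lemma ltn_bin_addl x k : 0 < k -> x < 'C(x + k, k).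
Proof.
case: k => // k _; elim: k => [|k IH]; first by rewrite addn1 bin1.
by rewrite addnS binS; lia.
Qed.

Lemma leq_last_filter_iota (p : pred nat) N a :
  a < N -> p a -> a <= last 0 [seq b <- iota 0 N | p b].
Proof.
elim: N => // N IH aN pa; rewrite -addn1 iotaD add0n cats1 filter_rcons.
case: ifP => pN; first by rewrite last_rcons -ltnS.
have aN' : a != N by apply: contraFneq pN => <-.
by apply: IH pa; lia.
Qed.

Lemma greedy_top_spec k x : 0 < k ->
  'C(greedy_top k x, k) <= x < 'C((greedy_top k x).+1, k).
Proof.
move=> k0; rewrite /greedy_top; set s := filter _ _.
apply/andP; split.
  have := mem_last 0 s; rewrite inE mem_filter => /predU1P [-> | /andP [] //].
  by rewrite bin0n eqn0Ngt k0.
rewrite ltnNge; apply/negP => hx.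
have gN : (last 0 s).+1 < x + k + 1.
  rewrite ltnNge; apply/negP => /(leq_bin2l k).
  by have := ltn_bin_addl x k0; have := @leq_bin2l (x + k) (x + k + 1) k; lia.
by have := leq_last_filter_iota (p := fun a => 'C(a, k) <= x) gN hx; rewrite ltnn.
Qed.

Lemma cascade_sum_canon k x : 0 < k -> cascade_sum k (canon k x) = x.
Proof.
elim: k x => // k IH x _ /=; case: eqP => [-> // | _].
have /andP [lo hi] := greedy_top_spec x (ltn0Sn k).
rewrite cascade_sumS; case: k IH lo hi => [|k] IH lo hi; last by rewrite IH //; lia.
by rewrite !bin1 in lo hi *; rewrite addn0; lia.
Qed.

Lemma canon_path k x a : x < 'C(a, k) -> path gtn a (canon k x).
Proof.
elim: k x a => // k IH x a xa /=; case: eqP => // _ /=.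
have /andP [lo hi] := greedy_top_spec x (ltn0Sn k).
rewrite IH; last by rewrite binS in hi; lia.
rewrite andbT ltnNge; apply/negP => /(leq_bin2l k.+1); lia.
Qed.

Lemma canon_sorted k x : sorted gtn (canon k x).
Proof.
case: k => [|k] //; have := canon_path (ltn_bin_addl x (ltn0Sn k)).
by case: (canon _ _) => //= a s /andP [].
Qed.

Theorem corollary1 (u s x n m : nat) :
  1 < u -> 2 * u + 2 <= s ->
  canon u.+1 x = [:: n; m; (2 * u - 1)%N] ->
  forall y : nat, 'C(n, u.+1) + 'C(m, u) <= y -> y <= x ->
    max_ks_kr_le s u.+1 y ('C(n, s) + 'C(m, s - 1)).
Proof.
case: u => [|[|w]] // _ hs hc y hy1 hy2.
have [l sl] : exists l, s = l.+2 by exists s.-2; lia.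
subst s; rewrite subn1 /=.
have hx := cascade_sum_canon x (ltn0Sn w.+2).
rewrite hc !cascade_sumS /= addn0 in hx.
have := canon_sorted w.+3 x; rewrite hc => /and3P [mn _ _].
split.
  exists _, (@clique_plus_vertex n m); split; first exact: clique_plus_vertex_simple.
  by rewrite !(kcount_clique_plus_vertex (ltnW mn)).
move=> T e _ hk; rewrite leqNgt; apply/negP => hlt.
have wl : w.+1 <= l by lia.
have := kcount_lower_bound mn wl hlt.
(* C(2u-1, u-1) < C(2u, u-1) <= C(s-2, u-1) *)
have := @leq_bin2l (2 * w.+2 - 1).+1 l w.+1; have := binS (2 * w.+2 - 1) w.
have : 0 < 'C(2 * w.+2 - 1, w) by rewrite bin_gt0; lia.
lia.
Qed.
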